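(* Consider an execution of the convergence algorithm described in the context, with $n>5f$ robots of which at most $f$ are Byzantine and $m$ are correct, in the CORDA model under a fully asynchronous scheduler. Let $b>0$. Let $D_i$ be a destination computed by a correct robot $i$ in a cycle started at time $t$ (i.e., whose Look occurred at time $t$). If $D_i<\min UD(t)+b$, then at time $t$ at least $m-2f$ correct robots are located at positions $<\min UD(t)+2b$.
   Context: Setting: $n$ robots on the real line, at most $f$ Byzantine (arbitrary positions). Robots are anonymous, oblivious, have no common orientation, and have unlimited visibility with strong multiplicity detection. Correct robots run Look–Compute–Move cycles in the CORDA model, where phases of different robots interleave arbitrarily. Algorithm: with snapshot sorted $P_1\le\dots\le P_n$ and own position $x_i$, robot $i$ is elected iff $x_i\le P_{f+1}$ or $x_i\ge P_{n-f}$. If elected, its destination is the midpoint of $\min(x_i,P_{2f+1})$ and $\max(x_i,P_{n-2f})$, which is the center of $trim^i_{2f}(P)$ (remove, among the $2f$ smallest positions, those below $x_i$, and, among the $2f$ largest positions, those above $x_i$). Notation: the destination of a correct robot at time $t$ is the last destination it computed at or before $t$ (its position if none). $UD(t)$ is the multiset union of positions and destinations of all correct robots at time $t$. *)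

From HB Require Import structures.
From mathcomp Require Import all_boot all_order all_algebra.
Set Implicit Arguments. Unset Strict Implicit. Unset Printing Implicit Defensive.
Import Order.TTheory GRing.Theory Num.Theory.
Local Open Scope ring_scope.

Section Defs.
Variable R : realFieldType.

(* P_k of the sorted multiset s, 1-based: P_1 <= ... <= P_(size s). *)
Definition kth (s : seq R) (k : nat) : R := nth 0 (sort <=%R s) k.-1.

Definition seq_min (s : seq R) : R := \big[Num.min/head 0 s]_(x <- s) x.

Definition elected (f : nat) (P : seq R) (x : R) : bool :=
  (x <= kth P f.+1) || (kth P (size P - f)%N <= x).

(* Destination computed by the algorithm: Some (center of trim^i_(2f)(P))
   if elected, None (no destination computed, robot does not move) otherwise. *)
Definition algo_dest (f : nat) (P : seq R) (x : R) : option R :=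
  if elected f P x then
    Some ((Num.min x (kth P (2 * f).+1) + Num.max x (kth P (size P - 2 * f)%N)) / 2)
  else None.

Definition snap (m k : nat) (pos : 'I_m -> R -> R) (bpos : 'I_k -> R -> R) (t : R)
  : seq R := [seq pos j t | j : 'I_m] ++ [seq bpos j t | j : 'I_k].

End Defs.

(* An execution of the algorithm in CORDA (fully asynchronous scheduler),
   with m correct robots (indexed 'I_m) and k Byzantine robots (indexed 'I_k),
   algorithm parameter f. Correct robot i performs cycles c = 0,1,2,...:
   Look at look i c, Compute at comp i c, Move during [comp i c, mend i c]. *)
Record execution (R : realFieldType) (m k f : nat) := Execution {
  pos  : 'I_m -> R -> R;
  bpos : 'I_k -> R -> R;
  look : 'I_m -> nat -> R;
  comp : 'I_m -> nat -> R;
  mend : 'I_m -> nat -> R;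
  dest : 'I_m -> R -> R;
  ex_look_comp : forall i c, look i c <= comp i c;
  ex_comp_end  : forall i c, comp i c <= mend i c;
  ex_end_look  : forall i c, mend i c <= look i c.+1;
  ex_look_lt   : forall i c, look i c < look i c.+1;
  (* fairness: every correct robot is activated infinitely often *)
  ex_fair : forall i T, exists c, T < look i c;
  ex_before : forall i t, t <= look i 0%N -> pos i t = pos i (look i 0%N);
  ex_wait : forall i c t, look i c <= t <= comp i c -> pos i t = pos i (look i c);
  ex_idle : forall i c t, mend i c <= t <= look i c.+1 -> pos i t = pos i (mend i c);
  (* during the Move phase, a robot moves on the segment towards its computed
     destination (possibly stopping early); it stays put if none was computed *)
  ex_move : forall i c t, comp i c <= t <= mend i c ->
    match algo_dest f (snap pos bpos (look i c)) (pos i (look i c)) return Prop with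
    | None => pos i t = pos i (comp i c)
    | Some d => Num.min (pos i (comp i c)) d <= pos i t <= Num.max (pos i (comp i c)) d
    end;
  (* destination at time t = last destination computed at or before t,
     or the current position if none *)
  ex_dest : forall i t,
    ((forall c, comp i c <= t ->
        algo_dest f (snap pos bpos (look i c)) (pos i (look i c)) = None)
       /\ dest i t = pos i t)
    \/ (exists c, comp i c <= t /\
         algo_dest f (snap pos bpos (look i c)) (pos i (look i c)) = Some (dest i t) /\
         forall c', (c < c')%N -> comp i c' <= t ->
           algo_dest f (snap pos bpos (look i c')) (pos i (look i c')) = None)
}.

Section ExecDefs.
Variables (R : realFieldType) (m k f : nat) (e : execution R m k f).

Definition cycle_dest (i : 'I_m) (c : nat) : option R :=
  algo_dest f (snap (pos e) (bpos e) (look e i c)) (pos e i (look e i c)).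

Definition UD (t : R) : seq R :=
  [seq pos e j t | j : 'I_m] ++ [seq dest e j t | j : 'I_m].

Definition minUD (t : R) : R := seq_min (UD t).
End ExecDefs.

(* Let M := min UD(t). Correct robots sit at or above M and at most f
   Byzantine robots can sit below it, so P_(2f+1) >= M and the lower end
   min(x_i, P_(2f+1)) of the trimmed interval is >= M. Its center D_i being
   < M + b, the upper end max(x_i, P_(n-2f)) is < M + 2b. Hence n - 2f
   robots lie below M + 2b, and removing the at most f Byzantine ones
   leaves m - 2f correct robots there. *)

From HB Require Import structures.
From mathcomp Require Import all_boot all_order all_algebra.
From mathcomp Require Import lra zify.
Import Order.TTheory GRing.Theory Num.Theory.
Local Open Scope ring_scope.

Lemma count_image (T : finType) (U : Type) (F : T -> U) (p : pred U) :
  count p [seq F j | j : T] = #|[set j | p (F j)]|.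
Proof.
rewrite count_map cardsE cardE /enum_mem size_filter.
by rewrite /image_mem /enum_mem filter_predT.
Qed.

Section OrderStatistics.
Context {R : realFieldType}.
Implicit Types (s : seq R) (v : R).

Lemma kth_count_ge s j v :
  (count (< v) s < j <= size s)%N -> v <= kth s j.
Proof.
case: j => [|j] // hj; rewrite /kth; apply: nth_count_ge.
  by apply: sort_sorted; exact: le_total.
by rewrite size_sort ((permP (permEl (perm_sort _ _))) (< v)).
Qed.

Lemma kth_count_lt s j v :
  kth s j < v -> (0 < j <= size s)%N -> (j <= count (< v) s)%N.
Proof.
move=> hlt hj; rewrite leqNgt; apply/negP => hcnt.
by move: hlt; rewrite ltNge kth_count_ge //; lia.
Qed.

Lemma seq_min_le s y : y \in s -> seq_min s <= y.
Proof. by move=> ys; exact: (ge_bigmin_seq _ _ predT id ys). Qed.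

End OrderStatistics.

Lemma kth_upper_lt_of_algo_dest {R : realFieldType} [f : nat] [P : seq R]
    [x D L b : R] :
  algo_dest f P x = Some D -> L <= x -> L <= kth P (2 * f).+1 -> D < L + b ->
  kth P (size P - 2 * f) < L + 2 * b.
Proof.
rewrite /algo_dest; case: elected => // -[<-] hx hlo.
set lo := Num.min _ _; set hi := Num.max _ _.
have hLlo : L <= lo by rewrite le_min hx hlo.
have hhi : kth P (size P - 2 * f) <= hi by rewrite le_max lexx orbT.
lra.
Qed.

Section Snapshot.
Context {R : realFieldType} {m k : nat}.
Variables (pos : 'I_m -> R -> R) (bpos : 'I_k -> R -> R).

Lemma size_snap t : size (snap pos bpos t) = (m + k)%N.
Proof. by rewrite size_cat !size_image !card_ord. Qed.

Lemma count_snap_lt (v t : R) :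
  (count (< v) (snap pos bpos t) <= #|[set j | (pos j t < v)%R]| + k)%N.
Proof.
rewrite count_cat !count_image leq_add2l.
by rewrite -[X in (_ <= X)%N](card_ord k) max_card.
Qed.

End Snapshot.

Lemma minUD_le_pos {R : realFieldType} {m k f : nat} (e : execution R m k f)
    (t : R) (j : 'I_m) :
  minUD e t <= pos e j t.
Proof. by apply: seq_min_le; rewrite mem_cat image_f. Qed.

Theorem lemma12 (R : realFieldType) (m k f : nat) (e : execution R m k f)
  (b : R) (i : 'I_m) (c : nat) (Di : R) :
  (k <= f)%N -> (5 * f < m + k)%N -> 0 < b ->
  cycle_dest e i c = Some Di ->
  Di < minUD e (look e i c) + b ->
  (m - 2 * f <= #|[set j : 'I_m | (pos e j (look e i c) < minUD e (look e i c) + 2 * b)%R]|)%N.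
Proof.
move=> hkf hn hb hDi hDi_lt.
set t := look e i c in hDi hDi_lt *; set M := minUD e t in hDi_lt *.
set P := snap (pos e) (bpos e) t.
have sizeP : size P = (m + k)%N by exact: size_snap.
have none_below_M : #|[set j | pos e j t < M]| = 0%N.
  by apply: eq_card0 => j; rewrite !inE ltNge minUD_le_pos.
have M_le_lo : M <= kth P (2 * f).+1.
  apply: kth_count_ge; have := count_snap_lt (pos e) (bpos e) M t.
  rewrite -/P none_below_M sizeP => hcnt.
  by apply/andP; split; [apply: leq_ltn_trans hcnt _ | ]; lia.
have hup : kth P (size P - 2 * f) < M + 2 * b.
  exact: kth_upper_lt_of_algo_dest hDi (minUD_le_pos e t i) M_le_lo hDi_lt.
move/kth_count_lt: hup; rewrite sizeP => /(_ ltac:(lia)) hcnt.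
have hle := leq_trans hcnt (count_snap_lt (pos e) (bpos e) (M + 2 * b) t).
rewrite -(leq_add2r k); apply: leq_trans hle; lia.
Qed.
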